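(* Let $\beta\in(\frac{1+\sqrt5}{2},2)$. Suppose the quasi-greedy orbit of $1$ hits $\beta^{-1}(\beta-1)^{-1}$ for the first time, i.e. there is a minimal $k\ge1$ with $Q^k(1)=\beta^{-1}(\beta-1)^{-1}$ and $Q^i(1)\in[0,\beta^{-1})\cup(\beta^{-1}(\beta-1)^{-1},(\beta-1)^{-1}]$ for $1\le i\le k-1$. Then the greedy $\beta$-expansion of $1$ is finite, and there exist $n_0\ge1$ and a word $a_1\cdots a_{n_0}\in\{0,1\}^{n_0}$ with $a_{n_0}=1$ such that the quasi-greedy expansion of $1$ is $(\eta_i)=\big(a_1\cdots a_{n_0}\,\overline{a_1\cdots a_{n_0}}\big)^\infty$.
   Context: For $x\in[0,(\beta-1)^{-1}]$, a $\beta$-expansion of $x$ is $(a_n)\in\{0,1\}^{\mathbb{N}}$ with $x=\sum_n a_n\beta^{-n}$. The greedy map $G$ on $[0,(\beta-1)^{-1}]$ is $G(x)=\beta x \bmod 1$ for $x\in[0,1)$ and $G(x)=\beta x-1$ for $x\in[1,(\beta-1)^{-1}]$; the greedy expansion of $x$ has digits $a_n=\lfloor\beta G^{n-1}(x)\rfloor$. The quasi-greedy expansion $(\eta_i)$ of $1$ equals the greedy expansion of $1$ if the latter is infinite (does not end in $0^\infty$); if the greedy expansion is $a_1\cdots a_n0^\infty$ with $a_n=1$, then $(\eta_i)=(a_1\cdots a_{n-1}(a_n-1))^\infty$. The quasi-greedy orbit of $1$ is $Q^i(1)=\sum_{j\ge1}\eta_{i+j}\beta^{-j}$, $i\ge1$.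 For a word or sequence, the bar denotes the reflection $\overline{a}=1-a$ applied digitwise. *)

From Stdlib Require Import Reals Lra Lia ZArith.
Open Scope R_scope.

Definition greedy_map (beta x : R) : R :=
  if Rlt_dec x 1 then beta * x - IZR (Int_part (beta * x)) else beta * x - 1.

(* Greedy digits of x, indexed from 1: a_n = floor (beta * G^(n-1) x).
   (The value at index 0 is irrelevant.) *)
Definition greedy_digit (beta x : R) (n : nat) : Z :=
  Int_part (beta * Nat.iter (n - 1) (greedy_map beta) x).

Definition greedy_finite (beta x : R) : Prop :=
  exists N : nat, forall m : nat, (N <= m)%nat -> greedy_digit beta x m = 0%Z.

Definition quasi_greedy_one (beta : R) (eta : nat -> Z) : Prop :=
  (~ greedy_finite beta 1 /\
     forall i : nat, (1 <= i)%nat -> eta i = greedy_digit beta 1 i)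
  \/
  (exists n : nat, (1 <= n)%nat /\ greedy_digit beta 1 n = 1%Z /\
     (forall m : nat, (n < m)%nat -> greedy_digit beta 1 m = 0%Z) /\
     forall i : nat, (1 <= i)%nat ->
       let r := (((i - 1) mod n) + 1)%nat in
       eta i = (if Nat.eqb r n then (greedy_digit beta 1 n - 1)%Z
                else greedy_digit beta 1 r)).

Definition Qorbit (beta : R) (eta : nat -> Z) (i : nat) (q : R) : Prop :=
  infinite_sum (fun j : nat => IZR (eta (i + S j)%nat) / beta ^ (S j)) q.

(* The sequence eta (indexed from 1) equals (w_1..w_n0 bar(w_1..w_n0))^infinity. *)
Definition periodic_with_reflection (eta : nat -> Z) (w : nat -> Z) (n0 : nat) : Prop :=
  forall i : nat, (1 <= i)%nat ->
    let r := ((i - 1) mod (2 * n0))%nat in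
    eta i = (if Nat.ltb r n0 then w (S r) else (1 - w (S (r - n0))))%Z.

From Stdlib Require Import Reals Lra Lia ZArith Classical.
Open Scope R_scope.

(* Outside the switch region [1/beta, 1/(beta (beta - 1))] the quasi-greedy
   digit of an orbit point is forced, and the reflection x |-> 1/(beta-1) - x
   maps the orbit dynamics to itself with every digit flipped.  Since
   Q^k(1) = 1/(beta (beta - 1)) produces the digit 1 and
   Q^(k+1)(1) = 1/(beta-1) - 1, the next k orbit points reflect the first k
   ones, reaching 1/(beta-1) - Q^k(1) = 1/beta.  There the quasi-greedy
   expansion must take the digit 0 (the other choice ends in 0^infinity),
   and the orbit is back at 1 after 2(k+1) steps: the expansion is the
   block a_1..a_(k+1) followed by its reflection, repeated.  The orbit of
   the greedy map never returns to 1, so the greedy expansion of 1 is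
   finite. *)

Lemma gt_golden_ratio_gt_1 (beta : R) : (1 + sqrt 5) / 2 < beta -> 1 < beta.
Proof.
  intros Hb. assert (Hs : sqrt 1 < sqrt 5) by (apply sqrt_lt_1; lra).
  rewrite sqrt_1 in Hs. lra.
Qed.

Lemma gt_golden_ratio_switch_right_lt_1 (beta : R) :
  (1 + sqrt 5) / 2 < beta -> / beta * / (beta - 1) < 1.
Proof.
  intros Hb. assert (H1 := gt_golden_ratio_gt_1 beta Hb).
  assert (H5 : sqrt 5 * sqrt 5 = 5) by (apply sqrt_sqrt; lra).
  assert (0 <= sqrt 5) by apply sqrt_pos.
  rewrite <- Rinv_mult, <- Rinv_1. apply Rinv_lt_contravar; nra.
Qed.

Lemma inv_lt_switch_right (beta : R) :
  1 < beta -> beta < 2 -> / beta < / beta * / (beta - 1).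
Proof.
  intros H1 H2. rewrite <- (Rmult_1_r (/ beta)) at 1.
  apply Rmult_lt_compat_l; [apply Rinv_0_lt_compat; lra|].
  rewrite <- Rinv_1. apply Rinv_lt_contravar; lra.
Qed.

Lemma inv_pred_sub_switch_right (beta : R) :
  1 < beta -> / (beta - 1) - / beta * / (beta - 1) = / beta.
Proof. intros H1. field. lra. Qed.

(* The switch region [1/beta, 1/(beta (beta - 1))] is where both digits are
   admissible; off it the digit is forced. *)
Definition off_switch_region (beta x : R) : Prop :=
  x < / beta \/ / beta * / (beta - 1) < x.

Lemma succ_mod (i n : nat) : n <> 0%nat ->
  S i mod n = if Nat.eqb (S (i mod n)) n then 0%nat else S (i mod n).
Proof.
  intros Hn. pose proof (Nat.div_mod_eq i n). pose proof (Nat.mod_upper_bound i n Hn).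
  destruct (Nat.eqb_spec (S (i mod n)) n); symmetry.
  - apply (Nat.mod_unique _ _ (S (i / n))); nia.
  - apply (Nat.mod_unique _ _ (i / n)); lia.
Qed.

Lemma periodic_with_reflection_intro (e : nat -> Z) (n : nat) : (1 <= n)%nat ->
  (forall i, e (S i) = e (S (i mod (2 * n)))) ->
  (forall j, (j < n)%nat -> e (S (n + j)) = (1 - e (S j))%Z) ->
  periodic_with_reflection e e n.
Proof.
  intros Hn Hper Hrefl [|i] Hi; [lia|]. cbv zeta.
  replace (S i - 1)%nat with i by lia. rewrite Hper.
  assert (Hr : (i mod (2 * n) < 2 * n)%nat) by (apply Nat.mod_upper_bound; lia).
  destruct (Nat.ltb_spec (i mod (2 * n)) n); [reflexivity|].
  replace (i mod (2 * n))%nat with (n + (i mod (2 * n) - n))%nat at 1 by lia.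
  apply Hrefl. lia.
Qed.

(* [s m] plays the role of Q^m(1): the digits are read off the orbit by
   s (m+1) = beta s m - e (m+1), and the last field rules out an expansion
   ending in 0^infinity. *)
Record quasi_greedy_orbit (beta : R) (e : nat -> Z) (s : nat -> R) : Prop := {
  qg_base : 1 < beta;
  qg_digit : forall m, e (S m) = 0%Z \/ e (S m) = 1%Z;
  qg_bound : forall m, 0 <= s m <= 1;
  qg_start : s 0%nat = 1;
  qg_step : forall m, s (S m) = beta * s m - IZR (e (S m));
  qg_infinite : forall N, exists m, (N <= m)%nat /\ e (S m) <> 0%Z }.

Section QuasiGreedyOrbit.

Variables (beta : R) (e : nat -> Z) (s : nat -> R).
Hypothesis orbit : quasi_greedy_orbit beta e s.

Let beta_gt_1 : 1 < beta := qg_base _ _ _ orbit.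
Let digit_01 := qg_digit _ _ _ orbit.
Let orbit_bound := qg_bound _ _ _ orbit.
Let orbit_start : s 0%nat = 1 := qg_start _ _ _ orbit.
Let orbit_step := qg_step _ _ _ orbit.

Lemma orbit_partial_sum i N :
  sum_f_R0 (fun j => IZR (e (i + S j)%nat) / beta ^ S j) N
  = s i - s (i + S N)%nat / beta ^ S N.
Proof.
  induction N as [|N IH].
  - simpl. rewrite Nat.add_1_r, orbit_step. field. lra.
  - change (sum_f_R0 ?f (S N)) with (sum_f_R0 f N + f (S N)).
    rewrite IH, (Nat.add_succ_r i (S N)), orbit_step.
    simpl pow. field. split; [apply pow_nonzero|]; lra.
Qed.

Lemma Qorbit_orbit i : Qorbit beta e i (s i).
Proof.
  intros eps Heps.
  destruct (pow_lt_1_zero (/ beta)) with (y := eps) as [N HN]; [|exact Heps|].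
  { rewrite Rabs_right, <- Rinv_1; [apply Rinv_lt_contravar|left; apply Rinv_0_lt_compat]; lra. }
  exists N. intros n Hn. unfold Rdist. rewrite orbit_partial_sum.
  replace (s i - s (i + S n)%nat / beta ^ S n - s i)
    with (- (s (i + S n)%nat * (/ beta) ^ S n)) by (rewrite pow_inv; unfold Rdiv; ring).
  rewrite Rabs_Ropp, Rabs_mult.
  assert (Hpow : Rabs ((/ beta) ^ S n) < eps) by (apply HN; lia).
  assert (Hs : Rabs (s (i + S n)%nat) <= 1)
    by (destruct (orbit_bound (i + S n)%nat); rewrite Rabs_right; lra).
  pose proof (Rabs_pos (s (i + S n)%nat)). pose proof (Rabs_pos ((/ beta) ^ S n)). nra.
Qed.

Lemma Qorbit_orbit_eq i q : Qorbit beta e i q -> s i = q.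
Proof. exact (uniqueness_sum _ _ _ (Qorbit_orbit i)). Qed.

Lemma digit_below_inv m : s m < / beta -> e (S m) = 0%Z.
Proof.
  intros Hm. destruct (digit_01 m) as [E|E]; [exact E|exfalso].
  assert (Hinv : beta * / beta = 1) by (field; lra).
  pose proof (orbit_bound (S m)). rewrite orbit_step, E in *. nra.
Qed.

Lemma digit_above_inv m : / beta < s m -> e (S m) = 1%Z.
Proof.
  intros Hm. destruct (digit_01 m) as [E|E]; [exfalso|exact E].
  assert (Hinv : beta * / beta = 1) by (field; lra).
  pose proof (orbit_bound (S m)). rewrite orbit_step, E in *. nra.
Qed.

Lemma digit_eq_of_orbit_eq x y : s x = s y -> s x <> / beta -> e (S x) = e (S y).
Proof.
  intros Hxy Hx. destruct (Rtotal_order (s x) (/ beta)) as [Hlt|[Heq|Hgt]].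
  - rewrite !digit_below_inv by lra; reflexivity.
  - contradiction.
  - rewrite !digit_above_inv by lra; reflexivity.
Qed.

Lemma orbit_zero_stays x : s x = 0 -> forall m, s (x + m)%nat = 0.
Proof.
  intros Hx m. induction m as [|m IH]; [now rewrite Nat.add_0_r|].
  rewrite Nat.add_succ_r, orbit_step, digit_below_inv, IH; [ring|].
  rewrite IH. apply Rinv_0_lt_compat. lra.
Qed.

Lemma orbit_at_inv x : s x = / beta -> e (S x) = 0%Z /\ s (S x) = 1.
Proof.
  intros Hx. destruct (digit_01 x) as [E|E].
  - split; [exact E|]. rewrite orbit_step, E, Hx. field. lra.
  - exfalso.
    assert (Hz : s (S x) = 0) by (rewrite orbit_step, E, Hx; field; lra).
    destruct (qg_infinite _ _ _ orbit (S x)) as [m [Hm Hem]]. apply Hem.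
    apply digit_below_inv. replace m with (S x + (m - S x))%nat by lia.
    rewrite orbit_zero_stays by exact Hz. apply Rinv_0_lt_compat. lra.
Qed.

Lemma orbit_shift_eq a b M : s a = s b ->
  (forall j, (j < M)%nat -> s (a + j)%nat <> / beta) ->
  forall j, (j <= M)%nat -> s (a + j)%nat = s (b + j)%nat.
Proof.
  intros Hab Hne j. induction j as [|j IH]; intros Hj; [now rewrite !Nat.add_0_r|].
  assert (Hj' : s (a + j)%nat = s (b + j)%nat) by (apply IH; lia).
  rewrite !Nat.add_succ_r, !orbit_step, Hj'.
  rewrite (digit_eq_of_orbit_eq (a + j) (b + j)); [reflexivity|exact Hj'|apply Hne; lia].
Qed.

(* Between two visits to 1/beta the orbit is deterministic, and at 1/beta
   the quasi-greedy digit sends it back to 1. *)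
Lemma orbit_return n b : s n = / beta -> (forall j, (j < n)%nat -> s j <> / beta) ->
  s b = 1 -> s (b + S n)%nat = 1 /\ forall j, (j <= n)%nat -> e (S (b + j)) = e (S j).
Proof.
  intros Hn Hne Hb.
  assert (Hsh : forall j, (j <= n)%nat -> s j = s (b + j)%nat)
    by exact (orbit_shift_eq 0 b n ltac:(congruence) Hne).
  destruct (orbit_at_inv n Hn) as [En _].
  destruct (orbit_at_inv (b + n)) as [Ebn Sbn]; [rewrite <- Hsh; auto|].
  split; [now rewrite Nat.add_succ_r|].
  intros j Hj. destruct (Nat.eq_dec j n) as [->|Hjn]; [congruence|].
  symmetry. apply digit_eq_of_orbit_eq; [apply Hsh; lia|apply Hne; lia].
Qed.

Lemma digits_periodic n : s n = / beta -> (forall j, (j < n)%nat -> s j <> / beta) ->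
  forall i, e (S i) = e (S (i mod S n)).
Proof.
  intros Hn Hne.
  assert (Hret : forall q, s (q * S n)%nat = 1).
  { induction q as [|q IH]; [exact orbit_start|].
    replace (S q * S n)%nat with (q * S n + S n)%nat by lia.
    exact (proj1 (orbit_return n _ Hn Hne IH)). }
  intros i. rewrite (Nat.div_mod_eq i (S n)) at 1. rewrite Nat.mul_comm.
  apply (proj2 (orbit_return n _ Hn Hne (Hret _))).
  apply Nat.lt_succ_r, Nat.mod_upper_bound. lia.
Qed.

Section Reflection.

Hypothesis beta_lt_2 : beta < 2.

Lemma orbit_reflect_step x y : s y = / (beta - 1) - s x -> off_switch_region beta (s x) ->
  e (S y) = (1 - e (S x))%Z /\ s (S y) = / (beta - 1) - s (S x).
Proof.
  intros Hy Hx.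
  assert (Hsym := inv_pred_sub_switch_right beta beta_gt_1).
  assert (Hlt := inv_lt_switch_right beta beta_gt_1 beta_lt_2).
  assert (Hfix : beta * / (beta - 1) - 1 = / (beta - 1)) by (field; lra).
  rewrite !orbit_step, Hy.
  destruct Hx as [Hx|Hx].
  - rewrite (digit_below_inv x), (digit_above_inv y) by lra. split; [reflexivity|lra].
  - rewrite (digit_above_inv x), (digit_below_inv y) by lra. split; [reflexivity|lra].
Qed.

Lemma orbit_reflection a b M : s b = / (beta - 1) - s a ->
  (forall j, (j < M)%nat -> off_switch_region beta (s (a + j)%nat)) ->
  forall j, (j <= M)%nat -> s (b + j)%nat = / (beta - 1) - s (a + j)%nat.
Proof.
  intros Hab Hoff j. induction j as [|j IH]; intros Hj; [now rewrite !Nat.add_0_r|].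
  rewrite !Nat.add_succ_r.
  exact (proj2 (orbit_reflect_step _ _ (IH ltac:(lia)) (Hoff j ltac:(lia)))).
Qed.

Lemma quasi_greedy_reflected k : (1 + sqrt 5) / 2 < beta ->
  s k = / beta * / (beta - 1) ->
  (forall m, (1 <= m < k)%nat -> off_switch_region beta (s m)) ->
  e (S k) = 1%Z /\ s (2 * S k)%nat = 1 /\ periodic_with_reflection e e (S k).
Proof.
  intros Hgold Hsk Hoff.
  assert (Hlt := inv_lt_switch_right beta beta_gt_1 beta_lt_2).
  assert (Hsym := inv_pred_sub_switch_right beta beta_gt_1).
  assert (Hoff0 : forall m, (m < k)%nat -> off_switch_region beta (s m)).
  { intros [|m] Hm; [|apply Hoff; lia]. right. rewrite orbit_start.
    exact (gt_golden_ratio_switch_right_lt_1 beta Hgold). }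
  assert (Hek : e (S k) = 1%Z) by (apply digit_above_inv; lra).
  assert (Hs1 : s (S k) = / (beta - 1) - s 0%nat)
    by (rewrite orbit_step, Hek, Hsk, orbit_start; field; lra).
  assert (Hrefl : forall j, (j <= k)%nat -> s (S k + j)%nat = / (beta - 1) - s j)
    by exact (orbit_reflection 0 (S k) k Hs1 Hoff0).
  assert (Hinv : s (S k + k)%nat = / beta) by (rewrite Hrefl, Hsk by lia; lra).
  assert (Hne : forall j, (j < S k + k)%nat -> s j <> / beta).
  { intros j Hj. destruct (Nat.lt_total j k) as [Hjk|[->|Hjk]]; [| lra |].
    - destruct (Hoff0 j Hjk); lra.
    - replace j with (S k + (j - S k))%nat by lia. rewrite Hrefl by lia.
      destruct (Hoff0 (j - S k)%nat ltac:(lia)); lra. }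
  destruct (orbit_at_inv _ Hinv) as [Ezero Sone].
  replace (2 * S k)%nat with (S (S k + k)) by lia.
  split; [exact Hek|]. split; [exact Sone|].
  apply periodic_with_reflection_intro; [lia| |].
  - replace (2 * S k)%nat with (S (S k + k)) by lia. exact (digits_periodic _ Hinv Hne).
  - intros j Hj. destruct (Nat.eq_dec j k) as [->|Hjk]; [now rewrite Ezero, Hek|].
    exact (proj1 (orbit_reflect_step j (S k + j) (Hrefl j ltac:(lia)) (Hoff0 j ltac:(lia)))).
Qed.

End Reflection.

End QuasiGreedyOrbit.

Definition greedy_orbit (beta : R) (m : nat) : R := Nat.iter m (greedy_map beta) 1.

Section GreedyOrbit.

Variable beta : R.
Hypotheses (beta_gt_1 : 1 < beta) (beta_lt_2 : beta < 2).

Lemma greedy_orbit_bound m : 0 <= greedy_orbit beta m <= 1.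
Proof.
  induction m as [|m IH]; [unfold greedy_orbit; simpl; lra|].
  change (greedy_orbit beta (S m)) with (greedy_map beta (greedy_orbit beta m)).
  unfold greedy_map. destruct (Rlt_dec _ 1); [|nra].
  destruct (base_Int_part (beta * greedy_orbit beta m)). lra.
Qed.

Lemma greedy_digit_S m :
  greedy_digit beta 1 (S m) = Int_part (beta * greedy_orbit beta m).
Proof. unfold greedy_digit. now rewrite Nat.sub_1_r. Qed.

Lemma greedy_digit_01 m :
  greedy_digit beta 1 (S m) = 0%Z \/ greedy_digit beta 1 (S m) = 1%Z.
Proof.
  rewrite greedy_digit_S. pose proof (greedy_orbit_bound m).
  destruct (base_Int_part (beta * greedy_orbit beta m)).
  assert (-1 < Int_part (beta * greedy_orbit beta m))%Z by (apply lt_IZR; nra).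
  assert (Int_part (beta * greedy_orbit beta m) < 2)%Z by (apply lt_IZR; nra).
  lia.
Qed.

Lemma greedy_orbit_step m :
  greedy_orbit beta (S m) = beta * greedy_orbit beta m - IZR (greedy_digit beta 1 (S m)).
Proof.
  rewrite greedy_digit_S. pose proof (greedy_orbit_bound m).
  change (greedy_orbit beta (S m)) with (greedy_map beta (greedy_orbit beta m)).
  unfold greedy_map. destruct (Rlt_dec (greedy_orbit beta m) 1); [reflexivity|].
  replace (greedy_orbit beta m) with 1 by lra.
  rewrite <- (Int_part_spec (beta * 1) 1); [reflexivity|lra].
Qed.

Lemma greedy_orbit_S_lt_1 m : greedy_orbit beta (S m) < 1.
Proof.
  rewrite greedy_orbit_step, greedy_digit_S.
  destruct (base_Int_part (beta * greedy_orbit beta m)). lra.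
Qed.

Lemma greedy_digit_one : greedy_digit beta 1 1 = 1%Z.
Proof.
  destruct (greedy_digit_01 0) as [E|E]; [exfalso|exact E].
  pose proof (greedy_orbit_S_lt_1 0) as H. rewrite greedy_orbit_step, E in H.
  unfold greedy_orbit in H. simpl in H. lra.
Qed.

(* A positive point is expanded by beta at every zero digit, so it cannot
   stay in [0, 1] along a tail of zero digits. *)
Lemma greedy_orbit_zero_of_tail n :
  (forall m, (n < m)%nat -> greedy_digit beta 1 m = 0%Z) -> greedy_orbit beta n = 0.
Proof.
  intros Hz. destruct (greedy_orbit_bound n) as [G0 _].
  destruct (Rle_lt_or_eq_dec 0 _ G0) as [Gp|Ge]; [exfalso|auto].
  assert (Hpow : forall j, greedy_orbit beta (n + j) = beta ^ j * greedy_orbit beta n).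
  { induction j as [|j IH]; [rewrite Nat.add_0_r; simpl; ring|].
    rewrite Nat.add_succ_r, greedy_orbit_step, Hz, IH by lia. simpl. ring. }
  destruct (pow_lt_1_zero (/ beta)) with (y := greedy_orbit beta n) as [N HN]; [|exact Gp|].
  { rewrite Rabs_right, <- Rinv_1; [apply Rinv_lt_contravar|left; apply Rinv_0_lt_compat]; lra. }
  specialize (HN N (le_n N)).
  rewrite pow_inv, Rabs_right in HN by (left; apply Rinv_0_lt_compat, pow_lt; lra).
  assert (Hp : 0 < beta ^ N) by (apply pow_lt; lra).
  assert (Hinv : beta ^ N * / beta ^ N = 1) by (field; lra).
  destruct (greedy_orbit_bound (n + N)) as [_ Hle]. rewrite Hpow in Hle. nra.
Qed.

Lemma greedy_orbit_quasi_greedy (eta : nat -> Z) : ~ greedy_finite beta 1 ->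
  (forall i, (1 <= i)%nat -> eta i = greedy_digit beta 1 i) ->
  quasi_greedy_orbit beta eta (greedy_orbit beta).
Proof.
  intros Hinf Heq.
  assert (HeqS : forall m, eta (S m) = greedy_digit beta 1 (S m)) by (intro; apply Heq; lia).
  constructor; try intro m; try rewrite HeqS.
  - exact beta_gt_1.
  - apply greedy_digit_01.
  - apply greedy_orbit_bound.
  - reflexivity.
  - apply greedy_orbit_step.
  - apply NNPP. intros Hc. apply Hinf. exists (S m). intros i Hi.
    apply NNPP. intros Hd. apply Hc. exists (i - 1)%nat. split; [lia|].
    replace (S (i - 1)) with i by lia. rewrite Heq by lia. exact Hd.
Qed.

Lemma finite_greedy_orbit_quasi_greedy (eta : nat -> Z) n : (1 <= n)%nat ->
  greedy_digit beta 1 n = 1%Z ->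
  (forall m, (n < m)%nat -> greedy_digit beta 1 m = 0%Z) ->
  (forall i, (1 <= i)%nat ->
     let r := (((i - 1) mod n) + 1)%nat in
     eta i = (if Nat.eqb r n then (greedy_digit beta 1 n - 1)%Z
              else greedy_digit beta 1 r)) ->
  quasi_greedy_orbit beta eta (fun i => greedy_orbit beta (i mod n)).
Proof.
  intros Hn Hdn Htail Heq.
  assert (Hzero := greedy_orbit_zero_of_tail n Htail).
  assert (Hlast : beta * greedy_orbit beta (n - 1) = 1).
  { pose proof (greedy_orbit_step (n - 1)) as E.
    replace (S (n - 1)) with n in E by lia. rewrite Hdn, Hzero in E. lra. }
  assert (Hn1 : n <> 1%nat).
  { intros ->. pose proof (greedy_orbit_step 0) as E.
    rewrite greedy_digit_one, Hzero in E. unfold greedy_orbit in E. simpl in E. lra. }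
  assert (HeqS : forall i, eta (S i) = if Nat.eqb (S (i mod n)) n then 0%Z
                                       else greedy_digit beta 1 (S (i mod n))).
  { intro i. rewrite Heq by lia. cbv zeta. rewrite Nat.sub_1_r, Nat.add_1_r, Hdn. reflexivity. }
  constructor; cbv beta.
  - exact beta_gt_1.
  - intro i. rewrite HeqS. destruct (Nat.eqb _ _); [now left|apply greedy_digit_01].
  - intro i. apply greedy_orbit_bound.
  - now rewrite Nat.Div0.mod_0_l.
  - intro i. rewrite HeqS, succ_mod by lia.
    destruct (Nat.eqb_spec (S (i mod n)) n) as [E|E]; [|apply greedy_orbit_step].
    replace (i mod n)%nat with (n - 1)%nat by lia. rewrite Hlast. simpl. ring.
  - intro N. exists (N * n)%nat. split; [nia|].
    rewrite HeqS, Nat.Div0.mod_mul. destruct (Nat.eqb_spec 1 n); [lia|].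
    rewrite greedy_digit_one. discriminate.
Qed.

End GreedyOrbit.

Theorem lemma3p4 (beta : R) (eta : nat -> Z) :
  (1 + sqrt 5) / 2 < beta -> beta < 2 ->
  quasi_greedy_one beta eta ->
  (exists k : nat, (1 <= k)%nat /\
     Qorbit beta eta k (/ beta * / (beta - 1)) /\
     forall i : nat, (1 <= i)%nat -> (i <= k - 1)%nat ->
       exists q : R, Qorbit beta eta i q /\
         ((0 <= q /\ q < / beta) \/
          (/ beta * / (beta - 1) < q /\ q <= / (beta - 1)))) ->
  greedy_finite beta 1 /\
  exists (n0 : nat) (w : nat -> Z),
    (1 <= n0)%nat /\
    (forall j : nat, (1 <= j <= n0)%nat -> w j = 0%Z \/ w j = 1%Z) /\
    w n0 = 1%Z /\
    periodic_with_reflection eta w n0.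
Proof.
  intros Hgold Hlt2 Hqg [k [Hk [Hqk Hreg]]].
  assert (Hgt1 := gt_golden_ratio_gt_1 beta Hgold).
  assert (Hrefl : forall s, quasi_greedy_orbit beta eta s ->
    eta (S k) = 1%Z /\ s (2 * S k)%nat = 1 /\ periodic_with_reflection eta eta (S k)).
  { intros s Hs. apply (quasi_greedy_reflected _ _ _ Hs Hlt2 k Hgold).
    - exact (Qorbit_orbit_eq _ _ _ Hs k _ Hqk).
    - intros m Hm. destruct (Hreg m) as [q [Hq Hq']]; try lia.
      rewrite (Qorbit_orbit_eq _ _ _ Hs m q Hq). unfold off_switch_region. lra. }
  destruct Hqg as [[Hinf Heq] | [n [Hn [Hdn [Htail Heq]]]]].
  - exfalso.
    destruct (Hrefl _ (greedy_orbit_quasi_greedy beta Hgt1 Hlt2 eta Hinf Heq)) as [_ [Hone _]].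
    pose proof (greedy_orbit_S_lt_1 beta Hgt1 Hlt2 (S (2 * k))) as Hlt.
    replace (S (S (2 * k))) with (2 * S k)%nat in Hlt by lia. lra.
  - pose proof (finite_greedy_orbit_quasi_greedy beta Hgt1 Hlt2 eta n Hn Hdn Htail Heq) as Hs.
    destruct (Hrefl _ Hs) as [Hek [_ Hper]].
    split; [exists (S n); intros m Hm; apply Htail; lia|].
    exists (S k), eta. split; [lia|]. split; [|split; [exact Hek|exact Hper]].
    intros j Hj. replace j with (S (j - 1)) by lia. apply (qg_digit _ _ _ Hs).
Qed.
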